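(* Let $\mathcal{H}$ be a complex Hilbert space and let $T\in\mathcal{B}(\mathcal{H})$ be a $\Delta_T$-regular concave operator. If $T$ is $\Delta_{T^2}$-regular, then $T$ is completely hyperexpansive. In particular, if $\Delta_T$ has rank one, then $T$ is $\Delta_{T^2}$-regular.
   Context: For an operator $A$, $\Delta_A=A^*A-I$. $T$ is concave if $T^{*2}T^2-2T^*T+I\le0$. For a positive operator $A$, $T$ is $A$-regular if $AT=A^{1/2}TA^{1/2}$. $T$ is completely hyperexpansive if $\sum_{j=0}^n(-1)^j\binom{n}{j}T^{*j}T^j\le0$ for all $n\ge1$. *)

From mathcomp Require Import all_boot all_order all_algebra.
From mathcomp Require Import reals.
From mathcomp.real_closed Require Import complex.
Set Implicit Arguments. Unset Strict Implicit. Unset Printing Implicit Defensive.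
Import Order.TTheory GRing.Theory Num.Theory.
Local Open Scope ring_scope.

Section Hilbert.
Variables (R : realType) (V : lmodType R[i]) (ip : V -> V -> R[i]).

Definition is_hilbert : Prop :=
  [/\ (forall (a : R[i]) x y z, ip (a *: x + y) z = a * ip x z + ip y z),
      (forall x y, ip y x = (ip x y)^*),
      (forall x, 0 <= ip x x),
      (forall x, ip x x = 0 -> x = 0) &
      (forall u : nat -> V,
         (forall e : R[i], 0 < e -> exists N, forall m n, (N <= m)%N -> (N <= n)%N ->
            ip (u m - u n) (u m - u n) < e) ->
         exists l : V, forall e : R[i], 0 < e -> exists N, forall n, (N <= n)%N ->
            ip (u n - l) (u n - l) < e)].

Definition bounded_op (T : V -> V) : Prop :=
  (forall (a : R[i]) x y, T (a *: x + y) = a *: T x + T y) /\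
  exists M : R[i], forall x, ip (T x) (T x) <= M * ip x x.

Definition is_adjoint (T Tadj : V -> V) : Prop :=
  forall x y, ip (T x) y = ip x (Tadj y).

Definition op_ge0 (A : V -> V) : Prop := forall x, 0 <= ip (A x) x.
Definition op_le0 (A : V -> V) : Prop := forall x, ip (A x) x <= 0.

Definition Delta (A Aadj : V -> V) : V -> V := fun x => Aadj (A x) - x.

Definition concave (T Tadj : V -> V) : Prop :=
  op_le0 (fun x => Tadj (Tadj (T (T x))) - 2%:R *: Tadj (T x) + x).

Definition is_sqrt (A S : V -> V) : Prop :=
  [/\ bounded_op S, op_ge0 S & forall x, S (S x) = A x].

Definition regular (A S T : V -> V) : Prop :=
  forall x, A (T x) = S (T (S x)).

Definition compl_hyperexpansive (T Tadj : V -> V) : Prop :=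
  forall n : nat, (1 <= n)%N ->
    op_le0 (fun x => \sum_(j < n.+1)
              (((-1) ^+ j * ('C(n, j))%:R) : R[i]) *: iter j Tadj (iter j T x)).

Definition rank_one (A : V -> V) : Prop :=
  exists e : V, [/\ e != 0, (forall x, exists c : R[i], A x = c *: e)
                  & exists x, A x != 0].

End Hilbert.

(* Write D = Delta_T^(1/2) and E = Delta_(T^2)^(1/2).  Since
   T^*2 T^2 - I = Delta_T + T^* Delta_T T, we have |E x|^2 = |D x|^2 + |D T x|^2,
   and concavity says |D T x| <= |D x|; hence ker E = ker D and T maps ker D
   into itself.  Let C = Q T Q be the compression of T to (ker D)^perp (the
   orthogonal projection Q exists because ker D is closed) and G = C^* C.
   Delta_T-regularity gives D T = C D, Delta_(T^2)-regularity gives E T = C E,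
   and since E^2 = D^2 (I + G) the latter forces G C = C G.  Therefore
   |D T^k x|^2 = <G^k D x, D x>, and
     sum_j (-1)^j C(n, j) |T^j x|^2 = - <(I - G)^(n-1) D x, D x> <= 0:
   even powers of I - G are squares, and <(I - G) D y, D y> = |D y|^2 - |D T y|^2
   is nonnegative by concavity.
   If Delta_T has rank one, (ker D)^perp is the line through f = Delta_T x0,
   which E and T^* leave invariant, and E^2 T = E T E follows by comparing inner
   products with f. *)

From HB Require Import structures.
From mathcomp Require Import all_boot all_order all_algebra.
From mathcomp Require Import boolp classical_sets reals.
From mathcomp.real_closed Require Import complex.
From mathcomp Require Import ring lra.
Import Order.TTheory GRing.Theory Num.Theory.
Local Open Scope complex_scope.
Local Open Scope ring_scope.
Set Implicit Arguments. Unset Strict Implicit. Unset Printing Implicit Defensive.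

Lemma gtC0_real (R : rcfType) (e : R[i]) : 0 < e -> exists2 r : R, 0 < r & e = r%:C.
Proof. by case: e => a b; rewrite ltcE /= => /andP[/eqP -> a_gt0]; exists a. Qed.

Lemma exists_invS_lt (R : realType) (e : R) :
  0 < e -> exists N, forall n, (N <= n)%N -> n.+1%:R^-1 < e.
Proof.
move=> /ltr_add_invr[N]; rewrite add0r => hN; exists N => n le_Nn.
by apply: le_lt_trans hN; rewrite lef_pV2 ?posrE ?ler_nat.
Qed.

Lemma eq0_of_linear_le_quadratic (R : realFieldType) (r c : R) :
  0 <= c -> (forall s, s * r <= s ^+ 2 * c) -> r = 0.
Proof.
move=> c_ge0 le_rc; pose t := (c + 1)^-1.
have t_gt0 : 0 < t by rewrite invr_gt0; lra.
have tc1 : t * (c + 1) = 1 by rewrite mulVf // gt_eqF //; lra.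
have tc : t * c = 1 - t by rewrite -tc1 mulrDr mulr1 addrK.
have rt_sqr : r * r * t ^+ 2 * c = r * t * r - (r * t) ^+ 2.
  have -> : r * r * t ^+ 2 * c = r * r * t * (t * c) by ring.
  rewrite tc; ring.
have := le_rc (r * t); rewrite exprMn expr2 {}rt_sqr => le_rt.
have /eqP : (r * t) ^+ 2 = 0 by apply: le_anti; rewrite sqr_ge0; lra.
by rewrite sqrf_eq0 mulf_eq0 (gt_eqF t_gt0) orbF => /eqP.
Qed.

Section AlternatingBinomialSum.
Variable F : pzRingType.

Definition alt_binomial_sum m (a : nat -> F) :=
  \sum_(k < m.+1) ((-1) ^+ k * 'C(m, k)%:R) * a k.

Lemma alt_binomial_sumS m a :
  alt_binomial_sum m.+1 a = alt_binomial_sum m (fun k => a k - a k.+1).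
Proof.
rewrite /alt_binomial_sum big_ord_recl /= bin0 expr0 mul1r.
under eq_bigr => i _ do rewrite /bump /= add1n binS natrD mulrDr mulrDl.
rewrite big_split /= [X in _ + (X + _)]big_ord_recr /= bin_small // mulr0 mul0r addr0.
under [X in _ + (_ + X)]eq_bigr => i _ do rewrite exprS !mulN1r !mulNr.
under [RHS]eq_bigr => i _ do rewrite mulrBr.
rewrite sumrN sumrB [X in _ = X - _]big_ord_recl /= bin0 expr0 !mul1r.
by rewrite addrA.
Qed.

Lemma alt_binomial_sum0 a : alt_binomial_sum 0 a = a 0%N.
Proof. by rewrite /alt_binomial_sum big_ord1 expr0 bin0 !mul1r. Qed.

Lemma eq_alt_binomial_sum m a b : a =1 b -> alt_binomial_sum m a = alt_binomial_sum m b.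
Proof. by move=> ab; apply: eq_bigr => k _; rewrite ab. Qed.

Lemma alt_binomial_sumN m a :
  alt_binomial_sum m (fun k => - a k) = - alt_binomial_sum m a.
Proof. by rewrite /alt_binomial_sum -sumrN; apply: eq_bigr => k _; rewrite mulrN. Qed.
End AlternatingBinomialSum.

Section IterLinear.
Variables (K : pzRingType) (W : lmodType K) (F : W -> W).
Hypothesis F_linear : linear F.
HB.instance Definition _ := GRing.isLinear.Build _ _ _ _ F F_linear.

Lemma iter_linearB k u v : iter k F (u - v) = iter k F u - iter k F v.
Proof. by elim: k => //= k ->; rewrite linearB. Qed.
End IterLinear.

Section InnerProduct.
Variables (R : realType) (V : lmodType R[i]) (ip : V -> V -> R[i]).
Hypothesis ip_linear : forall (a : R[i]) x y z, ip (a *: x + y) z = a * ip x z + ip y z.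
Hypothesis ipC : forall x y, ip y x = (ip x y)^*.
Hypothesis ip_ge0 : forall x, 0 <= ip x x.
Hypothesis ip_eq0 : forall x, ip x x = 0 -> x = 0.

Lemma ip0l z : ip 0 z = 0.
Proof.
have := ip_linear 1 0 0 z; rewrite scaler0 addr0 mul1r => h.
by apply: (addrI (ip 0 z)); rewrite addr0 -h.
Qed.

Lemma ipDl x y z : ip (x + y) z = ip x z + ip y z.
Proof. by have := ip_linear 1 x y z; rewrite scale1r mul1r. Qed.

Lemma ipZl a x z : ip (a *: x) z = a * ip x z.
Proof. by have := ip_linear a x 0 z; rewrite !addr0 ip0l addr0. Qed.

Lemma ipNl x z : ip (- x) z = - ip x z.
Proof. by rewrite -scaleN1r ipZl mulN1r. Qed.

Lemma ipBl x y z : ip (x - y) z = ip x z - ip y z.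
Proof. by rewrite ipDl ipNl. Qed.

Lemma ip0r z : ip z 0 = 0.
Proof. by rewrite ipC ip0l conjC0. Qed.

Lemma ipDr x y z : ip z (x + y) = ip z x + ip z y.
Proof. by rewrite !(ipC _ z) ipDl rmorphD. Qed.

Lemma ipZr a x z : ip z (a *: x) = a^* * ip z x.
Proof. by rewrite !(ipC _ z) ipZl rmorphM. Qed.

Lemma ipNr x z : ip z (- x) = - ip z x.
Proof. by rewrite !(ipC _ z) ipNl rmorphN. Qed.

Lemma ipBr x y z : ip z (x - y) = ip z x - ip z y.
Proof. by rewrite ipDr ipNr. Qed.

Lemma ip_suml n (F : 'I_n -> V) z : ip (\sum_(j < n) F j) z = \sum_(j < n) ip (F j) z.
Proof.
by elim/big_rec2: _ => [|j x y _ <-]; rewrite ?ip0l ?ipDl.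
Qed.

Lemma ip_extl u w : (forall v, ip u v = ip w v) -> u = w.
Proof. by move=> h; apply/eqP; rewrite -subr_eq0; apply/eqP/ip_eq0; rewrite ipBl h subrr. Qed.

Lemma ip_extr u w : (forall v, ip v u = ip v w) -> u = w.
Proof. by move=> h; apply: ip_extl => v; rewrite ipC h -ipC. Qed.

Lemma adjoint_linear (T Tadj : V -> V) :
  (forall x y, ip (T x) y = ip x (Tadj y)) -> linear Tadj.
Proof. by move=> adjT a x y; apply: ip_extr => v; rewrite -adjT ipDr ipZr !adjT ipDr ipZr. Qed.

Lemma adjointC (T Tadj : V -> V) :
  (forall x y, ip (T x) y = ip x (Tadj y)) -> forall x y, ip (Tadj x) y = ip x (T y).
Proof. by move=> adjT x y; rewrite ipC -adjT -ipC. Qed.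

Lemma adjoint_iter (T Tadj : V -> V) :
  (forall x y, ip (T x) y = ip x (Tadj y)) ->
  forall k x y, ip (iter k Tadj x) y = ip x (iter k T y).
Proof.
move=> adjT; elim=> [|k IHk] x y //=.
by rewrite (adjointC adjT) IHk -iterSr.
Qed.

(* Polarization: the form (x, y) |-> <S x, y> - <x, S y> is sesquilinear and
   vanishes on the diagonal, hence everywhere. *)
Lemma psd_selfadjoint (S : {linear V -> V}) :
  (forall x, 0 <= ip (S x) x) -> forall x y, ip (S x) y = ip x (S y).
Proof.
move=> S_ge0.
pose a x y := ip (S x) y - ip x (S y).
have a_diag z : a z z = 0.
  by rewrite /a [ip z _]ipC; apply/eqP; rewrite subr_eq0; apply/eqP/esym/CrealP/ger0_real.
have aDl x y z : a (x + y) z = a x z + a y z by rewrite /a linearD !ipDl addrACA opprD.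
have aDr x y z : a z (x + y) = a z x + a z y by rewrite /a linearD !ipDr addrACA opprD.
have aZl c x z : a (c *: x) z = c * a x z by rewrite /a linearZ !ipZl mulrBr.
have aZr c x z : a x (c *: z) = c^* * a x z by rewrite /a linearZ !ipZr mulrBr.
have a_sym x y : a x y + a y x = 0.
  by have := a_diag (x + y); rewrite aDl !aDr !a_diag add0r addr0.
have a_skew x y : a x y = a y x.
  have := a_diag (x + 'i *: y); rewrite aDl !aDr !a_diag add0r addr0 aZl aZr conjCi.
  rewrite mulNr addrC => /eqP; rewrite subr_eq0 => /eqP.
  by move=> h; apply: (mulfI (neq0Ci R[i])); rewrite h.
move=> x y; apply/eqP; rewrite -subr_eq0 -/(a x y).
by have := a_sym x y; rewrite [a y x]a_skew -mulr2n => /eqP; rewrite mulrn_eq0.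
Qed.

Definition sqnorm v := complex.Re (ip v v).
Definition reip u v := complex.Re (ip u v).

Lemma sqnormE v : (sqnorm v)%:C = ip v v.
Proof. by rewrite /sqnorm RRe_real // ger0_real. Qed.

Lemma sqnorm_ge0 v : 0 <= sqnorm v.
Proof. by rewrite -lecR sqnormE. Qed.

Lemma reipDl u w v : reip (u + w) v = reip u v + reip w v.
Proof. by rewrite /reip ipDl; case: (ip u v) (ip w v) => [a b] [c d]. Qed.

Lemma reipZr (c : R) u v : reip u (c%:C *: v) = c * reip u v.
Proof. by rewrite /reip ipZr; case: (ip u v) => a b /=; rewrite oppr0 !mul0r subr0. Qed.

Lemma sqnormB u v : sqnorm (u - v) = sqnorm u + sqnorm v - 2 * reip u v.
Proof.
rewrite /sqnorm /reip ipBl !ipBr (ipC u v).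
by case: (ip u u) (ip u v) (ip v v) => [a b] [c d] [e f] /=; ring.
Qed.

Lemma sqnormZ (c : R) v : sqnorm (c%:C *: v) = c ^+ 2 * sqnorm v.
Proof.
rewrite /sqnorm ipZl ipZr.
by case: (ip v v) => a b /=; rewrite oppr0; ring.
Qed.

Lemma sqnorm_parallelogram u v :
  sqnorm (u + v) + sqnorm (u - v) = 2 * sqnorm u + 2 * sqnorm v.
Proof.
rewrite /sqnorm ipDl ipBl !ipBr !ipDr.
by case: (ip u u) (ip u v) (ip v u) (ip v v) => [a b] [c d] [e f] [g h] /=; ring.
Qed.

Lemma reip_le_sqnorm u k (s : R) : 2 * s * reip u k <= sqnorm u + s ^+ 2 * sqnorm k.
Proof. by have := sqnorm_ge0 (u - s%:C *: k); rewrite sqnormB sqnormZ reipZr; lra. Qed.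

Lemma ip_eq0_reip w k : reip w k = 0 -> reip w ('i *: k) = 0 -> ip w k = 0.
Proof. by rewrite /reip ipZr; case: (ip w k) => a b /= -> ?; congr Complex; lra. Qed.

Definition ip_cvg (u : nat -> V) (l : V) :=
  forall e, 0 < e -> exists N, forall n, (N <= n)%N -> ip (u n - l) (u n - l) < e.

Definition ip_cauchy (u : nat -> V) :=
  forall e, 0 < e -> exists N, forall m n, (N <= m)%N -> (N <= n)%N ->
    ip (u m - u n) (u m - u n) < e.

Lemma bounded_kernel_closed (D : {linear V -> V}) (M : R[i]) :
  (forall x, ip (D x) (D x) <= M * ip x x) ->
  forall u l, (forall n, D (u n) = 0) -> ip_cvg u l -> D l = 0.
Proof.
move=> D_bounded u l Du0 u_cvg; apply: ip_eq0; apply/eqP; rewrite eq_le ip_ge0 andbT.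
apply/ler_addgt0Pr => e e_gt0; rewrite add0r.
have M1_gt0 : 0 < `|M| + 1 by rewrite ltr_wpDl.
have [N /(_ N (leqnn N)) lt_e] := u_cvg _ (divr_gt0 e_gt0 M1_gt0).
set p := ip (u N - l) (u N - l) in lt_e.
have p_ge0 : 0 <= p := ip_ge0 _.
have le_Mp : ip (D l) (D l) <= M * p.
  by rewrite /p -opprB ipNl ipNr opprK -[D l]subr0 -(Du0 N) -linearB.
have Mp_real : M * p \is Num.real by apply: ger0_real (le_trans (ip_ge0 _) le_Mp).
apply: (le_trans le_Mp); apply: (le_trans (real_ler_norm Mp_real)).
rewrite normrM (ger0_norm p_ge0) -[e](divfK (lt0r_neq0 M1_gt0)) [_ / _ * _]mulrC.
by rewrite (ler_pM (normr_ge0 _) p_ge0) ?lerDl ?ltW.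
Qed.

Section Projection.
Hypothesis ip_complete : forall u, ip_cauchy u -> exists l, ip_cvg u l.
Variable K : set V.
Hypothesis K0 : K 0.
Hypothesis KD : forall x y, K x -> K y -> K (x + y).
Hypothesis KZ : forall a x, K x -> K (a *: x).
Hypothesis K_closed : forall u l, (forall n, K (u n)) -> ip_cvg u l -> K l.
Variable x : V.

Let dist := inf [set sqnorm (x - k) | k in K].

Let dist_le k : K k -> dist <= sqnorm (x - k).
Proof.
move=> Kk; apply: ge_inf; last by exists k.
by exists 0 => _ [k' _ <-]; apply: sqnorm_ge0.
Qed.

Let minimizing_sequence :
  exists kk : nat -> V, forall n, K (kk n) /\ sqnorm (x - kk n) < dist + n.+1%:R^-1.
Proof.
suff /choice[kk hkk] : forall n, exists k, K k /\ sqnorm (x - k) < dist + n.+1%:R^-1.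
  by exists kk.
move=> n; have has_inf_dist : has_inf [set sqnorm (x - k) | k in K].
  by split; [exists (sqnorm (x - 0)), 0 | exists 0 => _ [k _ <-]; apply: sqnorm_ge0].
have inv_gt0 : 0 < n.+1%:R^-1 :> R by rewrite invr_gt0.
by have [_ [k Kk <-] lt_k] := inf_adherent inv_gt0 has_inf_dist; exists k.
Qed.

Section MinimizingSequence.
Variable kk : nat -> V.
Hypothesis kkK : forall n, K (kk n).
Hypothesis kk_min : forall n, sqnorm (x - kk n) < dist + n.+1%:R^-1.

Lemma minimizing_cauchy m n : sqnorm (kk m - kk n) <= 2 * m.+1%:R^-1 + 2 * n.+1%:R^-1.
Proof.
pose mid := 2^-1 *: (kk m + kk n).
have mid_le : dist <= sqnorm (x - mid) := dist_le (KZ 2^-1 (KD (kkK m) (kkK n))).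
have := sqnorm_parallelogram (x - kk n) (x - kk m).
have -> : x - kk n + (x - kk m) = 2%:C *: (x - mid).
  rewrite scalerBr scalerA [2%:C]rmorph_nat mulfV ?pnatr_eq0 // scale1r scaler_nat.
  by rewrite mulr2n opprD addrACA [- kk n - kk m]addrC.
rewrite sqnormZ (_ : x - kk n - (x - kk m) = kk m - kk n); last first.
  by rewrite opprB addrC addrA subrK.
have := kk_min m; have := kk_min n.
set em := m.+1%:R^-1; set en := n.+1%:R^-1; lra.
Qed.

Lemma minimizing_ip_cauchy : ip_cauchy kk.
Proof.
move=> e /gtC0_real[eps eps_gt0 ->].
have [N hN] := exists_invS_lt (divr_gt0 eps_gt0 (ltr0n R 4)).
exists N => m n le_Nm le_Nn; rewrite -sqnormE ltcR.
have := minimizing_cauchy m n; have := hN m le_Nm; have := hN n le_Nn.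
set em := m.+1%:R^-1; set en := n.+1%:R^-1; lra.
Qed.

(* For real s, kk n + s k is in K, so expanding dist <= |x - kk n - s k|^2 and
   letting n grow bounds s Re <x - l, k> by s^2 |k|^2. *)
Lemma minimizing_limit_orth l :
  (forall e, 0 < e -> exists N, forall n, (N <= n)%N -> sqnorm (kk n - l) < e) ->
  forall k, K k -> reip (x - l) k = 0.
Proof.
move=> kk_cvg k Kk; apply: (eq0_of_linear_le_quadratic (sqnorm_ge0 k)) => s.
apply/ler_addgt0Pr => e e_gt0.
have [N1 hN1] := exists_invS_lt (divr_gt0 e_gt0 (ltr0n R 4)).
have [N2 hN2] := kk_cvg _ (divr_gt0 e_gt0 (ltr0n R 4)).
pose n := maxn N1 N2; have := hN1 n (leq_maxl _ _); have := hN2 n (leq_maxr _ _).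
have -> : x - l = x - kk n + (kk n - l) by rewrite addrA subrK.
rewrite reipDl; have := dist_le (KD (kkK n) (KZ s%:C Kk)).
rewrite opprD addrA sqnormB sqnormZ reipZr.
have := kk_min n; have := reip_le_sqnorm (kk n - l) k s.
set en := n.+1%:R^-1; lra.
Qed.

End MinimizingSequence.

Lemma orthogonal_projection : exists k, K k /\ forall k', K k' -> ip (x - k) k' = 0.
Proof.
have [kk /all_and2[kkK kk_min]] := minimizing_sequence.
have [l kk_cvg] := ip_complete (minimizing_ip_cauchy kkK kk_min).
have kk_cvgR e : 0 < e -> exists N, forall n, (N <= n)%N -> sqnorm (kk n - l) < e.
  move=> e_gt0; have [|N hN] := kk_cvg e%:C; first by rewrite ltcR.
  by exists N => n /hN; rewrite -sqnormE ltcR.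
exists l; split; first exact: K_closed kkK kk_cvg.
move=> k Kk; apply: ip_eq0_reip; apply: minimizing_limit_orth kk_cvgR _ _ => //.
exact: KZ.
Qed.

End Projection.

Section Defect.
Variables (T Tadj D E : V -> V).
Hypothesis T_linear : linear T.
Hypothesis adjT : forall x y, ip (T x) y = ip x (Tadj y).
Hypothesis D_linear : linear D.
Hypothesis D_ge0 : forall x, 0 <= ip (D x) x.
Hypothesis D_sqr : forall x, D (D x) = Tadj (T x) - x.
Hypothesis E_linear : linear E.
Hypothesis E_ge0 : forall x, 0 <= ip (E x) x.
Hypothesis E_sqr : forall x, E (E x) = Tadj (Tadj (T (T x))) - x.
Hypothesis T_regular : forall x, Tadj (T (T x)) - T x = D (T (D x)).
Hypothesis T_concave :
  forall x, ip (Tadj (Tadj (T (T x))) - 2%:R *: Tadj (T x) + x) x <= 0.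

HB.instance Definition _ := GRing.isLinear.Build _ _ _ _ T T_linear.
HB.instance Definition _ :=
  GRing.isLinear.Build _ _ _ _ Tadj (adjoint_linear adjT).
HB.instance Definition _ := GRing.isLinear.Build _ _ _ _ D D_linear.
HB.instance Definition _ := GRing.isLinear.Build _ _ _ _ E E_linear.

Let adjTadj x y : ip (Tadj x) y = ip x (T y) := adjointC adjT x y.
Let D_selfadj x y : ip (D x) y = ip x (D y) := psd_selfadjoint D_ge0 x y.
Let E_selfadj x y : ip (E x) y = ip x (E y) := psd_selfadjoint E_ge0 x y.

Lemma ip_defect x : ip (D x) (D x) = ip (T x) (T x) - ip x x.
Proof. by rewrite -D_selfadj D_sqr ipBl adjTadj. Qed.

Lemma defect2_sqr_split x : E (E x) = D (D x) + Tadj (D (D (T x))).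
Proof. by rewrite E_sqr !D_sqr linearB [RHS]addrC addrA subrK. Qed.

Lemma ip_defect2 x : ip (E x) (E x) = ip (D x) (D x) + ip (D (T x)) (D (T x)).
Proof. by rewrite -E_selfadj defect2_sqr_split ipDl adjTadj -!D_selfadj. Qed.

Lemma ip_concave x : ip (Tadj (Tadj (T (T x))) - 2%:R *: Tadj (T x) + x) x =
  ip (D (T x)) (D (T x)) - ip (D x) (D x).
Proof. by rewrite !ip_defect ipDl ipBl ipZl !adjTadj; ring. Qed.

Lemma defectT_le x : ip (D (T x)) (D (T x)) <= ip (D x) (D x).
Proof. by rewrite -subr_le0 -ip_concave. Qed.

Lemma defect_sqr_eq0 z : D (D z) = 0 -> D z = 0.
Proof. by move=> DDz; apply: ip_eq0; rewrite D_selfadj DDz ip0r. Qed.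

Lemma defectT_eq0 k : D k = 0 -> D (T k) = 0.
Proof.
move=> Dk; apply: ip_eq0; apply: le_anti; rewrite ip_ge0 andbT.
by have := defectT_le k; rewrite Dk ip0l.
Qed.

Lemma defect2_eq0 k : D k = 0 -> E k = 0.
Proof. by move=> Dk; apply: ip_eq0; rewrite ip_defect2 defectT_eq0 // Dk ip0l addr0. Qed.

Lemma defect_eq0_of_defect2 k : E k = 0 -> D k = 0.
Proof.
move=> Ek; apply: ip_eq0; apply: le_anti; rewrite ip_ge0 andbT.
have := ip_defect2 k; rewrite Ek ip0l => /eqP; rewrite eq_sym addr_eq0 => /eqP ->.
by rewrite oppr_le0.
Qed.

Definition perp_kerD v := forall k, D k = 0 -> ip v k = 0.

Lemma perp_kerD_eq0 v : perp_kerD v -> D v = 0 -> v = 0.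
Proof. by move=> v_perp Dv; apply: ip_eq0; apply: v_perp. Qed.

Lemma perp_kerDZ a u : perp_kerD u -> perp_kerD (a *: u).
Proof. by move=> u_perp k Dk; rewrite ipZl u_perp // mulr0. Qed.

Lemma perp_kerDD u v : perp_kerD u -> perp_kerD v -> perp_kerD (u + v).
Proof. by move=> u_perp v_perp k Dk; rewrite ipDl u_perp // v_perp // addr0. Qed.

Lemma perp_kerDB u v : perp_kerD u -> perp_kerD v -> perp_kerD (u - v).
Proof. by move=> u_perp v_perp k Dk; rewrite ipBl u_perp // v_perp // subr0. Qed.

Lemma perp_kerD_defect x : perp_kerD (D x).
Proof. by move=> k Dk; rewrite D_selfadj Dk ip0r. Qed.

Lemma perp_kerD_defect2 x : perp_kerD (E x).
Proof. by move=> k /defect2_eq0 Ek; rewrite E_selfadj Ek ip0r. Qed.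

Lemma perp_kerD_adj v : perp_kerD v -> perp_kerD (Tadj v).
Proof. by move=> v_perp k /defectT_eq0 DTk; rewrite adjTadj v_perp. Qed.

Section RankOne.
Variables (e x0 : V).
Hypothesis Delta_span : forall x, exists c, Tadj (T x) - x = c *: e.
Hypothesis Delta_x0_neq0 : Tadj (T x0) - x0 != 0.

Let f := D (D x0).

Let f_neq0 : f != 0. Proof. by rewrite /f D_sqr. Qed.

Let perp_kerD_f : perp_kerD f. Proof. exact: perp_kerD_defect. Qed.

(* Both Delta v and Delta f lie on the line spanned by e, with Delta f <> 0
   because f is orthogonal to ker D; so some v - t f lies in ker Delta = ker D. *)
Lemma perp_kerD_span v : perp_kerD v -> exists c, v = c *: f.
Proof.
move=> v_perp; have [cv Delta_v] := Delta_span v; have [cf Delta_f] := Delta_span f.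
have cf_neq0 : cf != 0.
  apply: contraNneq f_neq0 => cf0; apply/eqP/perp_kerD_eq0 => //.
  by apply: defect_sqr_eq0; rewrite D_sqr Delta_f cf0 scale0r.
exists (cv / cf); apply/eqP; rewrite -subr_eq0; apply/eqP.
apply: perp_kerD_eq0; first exact: perp_kerDB (perp_kerDZ _ perp_kerD_f).
apply: defect_sqr_eq0.
by rewrite !linearB !linearZ /= !D_sqr Delta_v Delta_f scalerN scalerA mulfVK // subrr.
Qed.

Lemma perp_kerD_inj_ip v w : perp_kerD v -> perp_kerD w -> ip v f = ip w f -> v = w.
Proof.
move=> v_perp w_perp vw_f; apply/eqP; rewrite -subr_eq0; apply/eqP.
have [c vw] := perp_kerD_span (perp_kerDB v_perp w_perp).
have /eqP : c * ip f f = 0 by rewrite -ipZl -vw ipBl vw_f subrr.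
by rewrite vw mulf_eq0 => /orP[/eqP -> | /eqP/ip_eq0 ->]; rewrite ?scale0r ?scaler0.
Qed.

(* Both sides lie in the range of E, inside (ker D)^perp = span f. *)
Lemma regular2_of_rank_one x : E (E (T x)) = E (T (E x)).
Proof.
have [b Ef] := perp_kerD_span (perp_kerD_defect2 f).
have [m Tadjf] := perp_kerD_span (perp_kerD_adj perp_kerD_f).
apply: perp_kerD_inj_ip (perp_kerD_defect2 _) (perp_kerD_defect2 _) _.
by rewrite !E_selfadj Ef linearZ /= Ef !ipZr !adjT Tadjf !ipZr E_selfadj Ef ipZr; ring.
Qed.
End RankOne.

Lemma regular2_rank_one :
  rank_one (Delta T Tadj) -> regular (Delta (T \o T) (Tadj \o Tadj)) E T.
Proof.
case=> e [_ Delta_span [x0 Delta_x0_neq0]] x.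
by rewrite /Delta /= -E_sqr (regular2_of_rank_one Delta_span Delta_x0_neq0).
Qed.

Section Compression.
Variable P : V -> V.
Hypothesis P_ker : forall x, D (P x) = 0.
Hypothesis P_orth : forall x, perp_kerD (x - P x).
Hypothesis T_regular2 : forall x, Tadj (Tadj (T (T (T x)))) - T x = E (T (E x)).

(* Locked, so that rewriting with additive lemmas cannot unfold Q. *)
Definition Q x := locked (x - P x).

Lemma QE x : Q x = x - P x. Proof. by rewrite /Q -lock. Qed.

Lemma perp_kerD_Q x : perp_kerD (Q x). Proof. by rewrite QE; apply: P_orth. Qed.

Lemma defect_Q x : D (Q x) = D x.
Proof. by rewrite QE linearB /= P_ker subr0. Qed.

Lemma defect2_Q x : E (Q x) = E x.
Proof. by rewrite QE linearB /= (defect2_eq0 (P_ker x)) subr0. Qed.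

Lemma Q_perp v : perp_kerD v -> Q v = v.
Proof.
move=> v_perp; apply/eqP; rewrite -subr_eq0; apply/eqP.
apply: perp_kerD_eq0; first exact: perp_kerDB (perp_kerD_Q v) v_perp.
by rewrite linearB /= defect_Q subrr.
Qed.

Lemma Q_linear : linear Q.
Proof.
move=> a x y; apply/eqP; rewrite -subr_eq0; apply/eqP; apply: perp_kerD_eq0.
  by do ![apply: perp_kerD_Q | apply: perp_kerDB | apply: perp_kerDD | apply: perp_kerDZ].
rewrite linearB /= (defect_Q (a *: x + y)) !linearP /= (defect_Q x) (defect_Q y).
by rewrite scalerN -opprD subrr.
Qed.

HB.instance Definition _ := GRing.isLinear.Build _ _ _ _ Q Q_linear.

Lemma Q_selfadj x y : ip (Q x) y = ip x (Q y).
Proof.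
have QP u v : ip (Q u) (P v) = 0 := perp_kerD_Q u (P_ker v).
have QPK u : u = Q u + P u by rewrite QE subrK.
rewrite {1}(QPK y) {2}(QPK x) ipDr ipDl.
by rewrite QP [ip (P x) _]ipC QP conjC0 !addr0.
Qed.

(* Regularity gives D T = C D (defectT), whence D G D = T^* D^2 T. *)
Definition C x := Q (T (Q x)).
Definition Cadj x := Q (Tadj (Q x)).
Definition G x := Cadj (C x).

HB.instance Definition _ := GRing.Linear.copy C (Q \o T \o Q).
HB.instance Definition _ := GRing.Linear.copy Cadj (Q \o Tadj \o Q).
HB.instance Definition _ := GRing.Linear.copy G (Cadj \o C).

Lemma adjC x y : ip (C x) y = ip x (Cadj y).
Proof. by rewrite /C /Cadj Q_selfadj adjT Q_selfadj. Qed.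

Lemma adjCadj x y : ip (Cadj x) y = ip x (C y).
Proof. by rewrite ipC -adjC -ipC. Qed.

Lemma G_selfadj x y : ip (G x) y = ip x (G y).
Proof. by rewrite /G adjCadj adjC. Qed.

Lemma Q_eq u v : D (u - v) = 0 -> Q u = Q v.
Proof.
move=> Duv; apply/eqP; rewrite -subr_eq0 -linearB; apply/eqP.
by apply: perp_kerD_eq0; [exact: perp_kerD_Q | rewrite defect_Q].
Qed.

Lemma defectT x : D (T x) = C (D x).
Proof.
rewrite /C (Q_perp (perp_kerD_defect x)) -[LHS](Q_perp (perp_kerD_defect _)).
by apply: Q_eq; rewrite linearB /= D_sqr T_regular subrr.
Qed.

Lemma defect2T x : E (T x) = C (E x).
Proof.
rewrite /C (Q_perp (perp_kerD_defect2 x)) -[LHS](Q_perp (perp_kerD_defect2 _)).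
by apply/Q_eq/defect_eq0_of_defect2; rewrite linearB /= E_sqr T_regular2 subrr.
Qed.

Lemma defect_C x : D (C x) = C (D x).
Proof. by rewrite defect_Q defectT defect_Q. Qed.

Lemma defect2_C x : E (C x) = C (E x).
Proof. by rewrite defect2_Q defect2T defect2_Q. Qed.

Lemma defect_Cadj x : D (Cadj x) = Cadj (D x).
Proof. by apply: ip_extl => y; rewrite D_selfadj adjCadj -defect_C -D_selfadj adjCadj. Qed.

Lemma defect_G x : D (G x) = G (D x).
Proof. by rewrite defect_Cadj defect_C. Qed.

Lemma defect2_sqr_G x : E (E x) = D (D (x + G x)).
Proof.
rewrite defect2_sqr_split linearD /= linearD /=; congr (_ + _).
apply: ip_extl => y.
by rewrite adjTadj D_selfadj !defectT adjC [RHS]D_selfadj defect_G G_selfadj.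
Qed.

(* Comparing E^2 C = C E^2 with E^2 = D^2 (I + G) shows D^2 (G C - C G) = 0. *)
Lemma G_C x : G (C x) = C (G x).
Proof.
apply/eqP; rewrite -subr_eq0; apply/eqP.
apply: perp_kerD_eq0; first exact: perp_kerDB (perp_kerD_Q _) (perp_kerD_Q _).
apply: defect_sqr_eq0.
have E2C : E (E (C x)) = D (D (C x + C (G x))).
  rewrite (defect2_C x) (defect2_C (E x)) defect2_sqr_G.
  by rewrite -(defect_C (D _)) -(defect_C (x + G x)) [C (_ + _)]linearD.
have h : D (D (C x + G (C x))) - D (D (C x + C (G x))) = 0.
  by rewrite -defect2_sqr_G E2C subrr.
rewrite -[RHS]h -[RHS]linearB -[in RHS]linearB /=.
by rewrite opprD addrACA subrr add0r.
Qed.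

Lemma defect_iterT k x : D (iter k T x) = iter k C (D x).
Proof. by elim: k => //= k <-; rewrite defectT. Qed.

Lemma G_iterC k u : G (iter k C u) = iter k C (G u).
Proof. by elim: k => //= k <-; rewrite G_C. Qed.

Lemma ip_iterC k u v : ip (iter k C u) (iter k C v) = ip (iter k G u) v.
Proof.
elim: k u v => //= k IHk u v.
by rewrite adjC -/(G _) G_iterC IHk -G_selfadj.
Qed.

Lemma alt_binomial_G_step m u :
  alt_binomial_sum m.+2 (fun k => ip (iter k G u) u) =
  alt_binomial_sum m (fun k => ip (iter k G (u - G u)) (u - G u)).
Proof.
rewrite !alt_binomial_sumS; apply: eq_alt_binomial_sum => k /=.
rewrite iter_linearB; last exact: linearP.
rewrite -iterSr ipBl !ipBr -!G_selfadj -!iterS; ring.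
Qed.

(* The sum is <(I - G)^m D x, D x>; G commutes with D, so two steps reduce m by 2,
   and m = 1 is concavity. *)
Lemma alt_binomial_G_ge0 m x : 0 <= alt_binomial_sum m (fun k => ip (iter k G (D x)) (D x)).
Proof.
elim: m {-2}m (leqnn m) x => [|n IHn] [|[|m]] // le_mn x.
- by rewrite alt_binomial_sum0 ip_ge0.
- by rewrite alt_binomial_sum0 ip_ge0.
- rewrite alt_binomial_sumS alt_binomial_sum0 -(ip_iterC 1) /= -defectT subr_ge0.
  exact: defectT_le.
- by rewrite alt_binomial_G_step -defect_G -linearB IHn // ltnW.
Qed.

Lemma compl_hyperexpansive_T : compl_hyperexpansive ip T Tadj.
Proof.
case=> // m _ x; rewrite /op_le0 ip_suml.
under eq_bigr => j _ do rewrite ipZl (adjoint_iter adjT).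
change (alt_binomial_sum m.+1 (fun k => ip (iter k T x) (iter k T x)) <= 0).
rewrite alt_binomial_sumS.
rewrite (eq_alt_binomial_sum _ (b := fun k => - ip (iter k G (D x)) (D x))); last first.
  by move=> k /=; rewrite -ip_iterC -defect_iterT ip_defect opprB.
by rewrite alt_binomial_sumN oppr_le0 alt_binomial_G_ge0.
Qed.
End Compression.

Lemma compl_hyperexpansive_of_regular2 :
  (forall u, ip_cauchy u -> exists l, ip_cvg u l) ->
  (exists M, forall x, ip (D x) (D x) <= M * ip x x) ->
  regular (Delta (T \o T) (Tadj \o Tadj)) E T -> compl_hyperexpansive ip T Tadj.
Proof.
move=> ip_complete [M D_bounded] T_regular2.
suff /choice[P /all_and2[P_ker P_orth]] : forall x, exists k, D k = 0 /\ perp_kerD (x - k).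
  exact: compl_hyperexpansive_T P_ker P_orth T_regular2.
move=> x; apply: (orthogonal_projection ip_complete (K := [set k | D k = 0])) => /=.
- exact: linear0.
- by move=> u v Du Dv; rewrite linearD /= Du Dv addr0.
- by move=> a u Du; rewrite linearZ /= Du scaler0.
- exact: (bounded_kernel_closed D_bounded).
Qed.

End Defect.
End InnerProduct.

Theorem corollary4p3 (R : realType) (V : lmodType R[i]) (ip : V -> V -> R[i])
  (T Tadj S1 S2 : V -> V) :
  is_hilbert ip ->
  bounded_op ip T ->
  is_adjoint ip T Tadj ->
  (* S1 = Delta_T^{1/2},  S2 = Delta_{T^2}^{1/2}  (T^2 has adjoint Tadj^2) *)
  is_sqrt ip (Delta T Tadj) S1 ->
  is_sqrt ip (Delta (T \o T) (Tadj \o Tadj)) S2 ->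
  regular (Delta T Tadj) S1 T ->
  concave ip T Tadj ->
  (regular (Delta (T \o T) (Tadj \o Tadj)) S2 T -> compl_hyperexpansive ip T Tadj) /\
  (rank_one (Delta T Tadj) -> regular (Delta (T \o T) (Tadj \o Tadj)) S2 T).
Proof.
move=> [ip_linear ipC ip_ge0 ip_eq0 ip_complete] [T_linear _] adjT.
move=> [[D_linear D_bounded] D_ge0 D_sqr] [[E_linear _] E_ge0 E_sqr] T_regular T_concave.
split.
  exact: (compl_hyperexpansive_of_regular2 ip_linear ipC ip_ge0 ip_eq0 T_linear adjT
    D_linear D_ge0 D_sqr E_linear E_ge0 E_sqr T_regular T_concave ip_complete D_bounded).
exact: (regular2_rank_one ip_linear ipC ip_ge0 ip_eq0 adjT
  D_linear D_ge0 D_sqr E_linear E_ge0 E_sqr T_concave).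
Qed.
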